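(* Let $p\in(0,1)$, let $(\mathcal M,d,0)$ be a finite pointed $p$-metric space, $a\in\mathbb R^{\mathcal M\setminus\{0\}}$ and $z\in\mathcal M\setminus\{0\}$ with $a_z=0$. Let $T\in\mathcal T(\mathcal M)$ satisfy $|\mathrm{desc}_T(z)|\ge1$ and put \[T(z,a):=\sum_{y\in\mathrm{desc}_T(z)}|c_T(y,a)|^pd^p(z,y)+\Big|\sum_{y\in\mathrm{desc}_T(z)}c_T(y,a)\Big|^pd^p(\mathrm{pred}_T(z),z).\] Assume that $T(z,a)\ge\sum_{y\in\mathrm{desc}_T(z)}|c_T(y,a)|^pd^p(\mathrm{pred}_T(z),y)$. Then \[T(a)\ge\Big\|\sum_{x\in\mathcal M\setminus\{0,z\}}a_x\delta(x)\Big\|_{\mathcal F_p(\mathcal M\setminus\{z\})}.\]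
   Context: A $p$-metric space is a set with $d$ such that $d^p$ is a metric; pointed means a distinguished point $0$. A $p$-Banach space is a complete vector space with a $p$-norm. $\delta(x)$ is evaluation at $x$ on real functions vanishing at $0$, and $\mathcal F_p(\mathcal M)$ is the completion of $\mathrm{span}\{\delta(x)\}$ under $\|\sum a_i\delta(x_i)\|=\sup\|\sum a_if(x_i)\|_Y$ over $p$-Banach $Y$ and $1$-Lipschitz $f:\mathcal M\to Y$ with $f(0)=0$; $\mathcal M\setminus\{z\}$ carries the restricted metric. $\mathcal T(\mathcal M)$ is the set of trees on $\mathcal M$ rooted at $0$; for $x\ne0$, $\mathrm{pred}_T(x)$ is the neighbour of $x$ on the path to $0$, $e_x^T=\{\mathrm{pred}_T(x),x\}$, $V_x^T$ is the vertex set of the subtree rooted at $x$, and $\mathrm{desc}_T(x)=\{v:\mathrm{pred}_T(v)=x\}$. $c_T(x,a)=\sum_{y\in V_x^T}a_y$ and $T(a)=\big(\sum_{x\in\mathcal M\setminus\{0\}}|c_T(x,a)d(e_x^T)|^p\big)^{1/p}$. *)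

From HB Require Import structures.
From mathcomp Require Import all_boot all_order all_algebra.
From mathcomp Require Import all_classical all_reals all_analysis.
Set Implicit Arguments. Unset Strict Implicit. Unset Printing Implicit Defensive.
Import Order.TTheory GRing.Theory Num.Theory.
Local Open Scope ring_scope.

Definition pmetric (R : realType) (M : finType) (p : R) (d : M -> M -> R) : Prop :=
  [/\ (forall x y, 0 <= d x y),
      (forall x y, d x y = 0 <-> x = y),
      (forall x y, d x y = d y x) &
      (forall x y w, d x w `^ p <= d x y `^ p + d y w `^ p)].

(* A tree on M rooted at o, given by its predecessor (parent) map pr:
   pr o = o and every vertex reaches the root by iterating pr. *)
Definition is_tree (M : finType) (o : M) (pr : M -> M) : Prop :=
  pr o = o /\ (forall x, exists n : nat, iter n pr x = o).

Definition subtree (M : finType) (pr : M -> M) (x : M) : {set M} :=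
  [set v | [exists n : 'I_#|M|.+1, iter n pr v == x]].

Definition desc (M : finType) (o : M) (pr : M -> M) (x : M) : {set M} :=
  [set v | (v != o) && (pr v == x)].

Definition cT (R : realType) (M : finType) (pr : M -> M) (a : M -> R) (x : M) : R :=
  \sum_(y in subtree pr x) a y.

Definition Tnorm (R : realType) (M : finType) (o : M) (d : M -> M -> R) (p : R)
  (pr : M -> M) (a : M -> R) : R :=
  (\sum_(x | x != o) `| cT pr a x * d (pr x) x | `^ p) `^ p^-1.

Definition Tza (R : realType) (M : finType) (o : M) (d : M -> M -> R) (p : R)
  (pr : M -> M) (a : M -> R) (z : M) : R :=
  \sum_(y in desc o pr z) `| cT pr a y | `^ p * d z y `^ p
  + `| \sum_(y in desc o pr z) cT pr a y | `^ p * d (pr z) z `^ p.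

Definition pBanach (R : realType) (Y : lmodType R) (p : R) (N : Y -> R) : Prop :=
  [/\ (forall y, 0 <= N y),
      (forall y, N y = 0 <-> y = 0),
      (forall (k : R) y, N (k *: y) = `|k| * N y),
      (forall y1 y2, N (y1 + y2) `^ p <= N y1 `^ p + N y2 `^ p) &
      (forall u : nat -> Y,
         (forall e : R, 0 < e -> exists n0 : nat, forall m n : nat,
             (n0 <= m)%N -> (n0 <= n)%N -> N (u m - u n) < e) ->
         exists l : Y, forall e : R, 0 < e -> exists n0 : nat, forall n : nat,
             (n0 <= n)%N -> N (u n - l) < e)].

From HB Require Import structures.
From mathcomp Require Import all_boot all_order all_algebra.
From mathcomp Require Import all_classical all_reals all_analysis.
Set Implicit Arguments. Unset Strict Implicit. Unset Printing Implicit Defensive.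
Import Order.TTheory GRing.Theory Num.Theory.
Local Open Scope ring_scope.

(* Replace f by f o contract, where contract sends z to pred z and fixes every
   other point; it vanishes at 0 and agrees with f off z.  Abel summation along
   the tree turns sum_x a_x f(contract x) into
   sum_x c_T(x,a) (f(contract x) - f(contract (pred x))), so by the p-triangle
   inequality its p-th power is at most the sum of |c_T(x,a)|^p times the p-th
   power of the length of the edge x -- contract (pred x).  Compared with T(a)^p
   the edge at z is gone and each child y of z pays d(pred z, y) instead of
   d(z, y); the hypothesis on T(z,a) says exactly that this costs nothing. *)

Lemma subtreeP (M : finType) (pr : M -> M) (x v : M) :
  reflect (exists n, iter n pr v = x) (v \in subtree pr x).
Proof.
rewrite inE; apply: (iffP existsP) => [[n /eqP <-]|[n hn]]; first by exists n.
have v_to_x : fconnect pr v x by rewrite -hn fconnect_iter.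
have lt_findex : (findex pr v x < #|M|.+1)%N.
  by apply: leq_trans (findex_max v_to_x) _; apply: leqW; apply: max_card.
by exists (Ordinal lt_findex); rewrite /= iter_findex.
Qed.
Arguments subtreeP {M pr x v}.

Section Tree.
Variables (M : finType) (o : M) (pr : M -> M).
Hypothesis tree : is_tree o pr.

Lemma tree_iter_cycle x k : iter k.+1 pr x = x -> x = o.
Proof.
case: tree => pr_o reach cycle; have [n hn] := reach x.
have iter_cycle j : iter (j * k.+1) pr x = x.
  by elim: j => [|j IH] //; rewrite mulSn iterD IH cycle.
have iter_o m : iter m pr o = o by elim: m => //= m ->.
by rewrite -(iter_cycle n) -(subnK (leq_pmulr n (ltn0Sn k))) iterD hn iter_o.
Qed.

Lemma pred_neq x : x != o -> pr x != x.
Proof. by apply: contra => /eqP /(@tree_iter_cycle x 0) ->. Qed.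

Lemma subtree_desc w u v : u \in desc o pr w -> v \in subtree pr u ->
  (v \in subtree pr w) && (v != w).
Proof.
rewrite inE => /andP[u_o /eqP pr_u] /subtreeP[n hn].
apply/andP; split; first by apply/subtreeP; exists n.+1; rewrite /= hn.
apply: contra u_o => /eqP v_w; apply/eqP/(@tree_iter_cycle u n).
by rewrite iterSr pr_u -v_w.
Qed.

Lemma subtree_descP w v : w != o -> v \in subtree pr w -> v != w ->
  exists2 u, u \in desc o pr w & v \in subtree pr u.
Proof.
case: tree => pr_o _ w_o /subtreeP[[|m] hm] v_w; first by rewrite -hm eqxx in v_w.
exists (iter m pr v); last by apply/subtreeP; exists m.
rewrite inE -hm eqxx andbT; apply: contra w_o => /eqP u_o.
by rewrite -hm /= u_o pr_o.
Qed.

Lemma subtree_desc_uniq w u u' v : u \in desc o pr w -> u' \in desc o pr w ->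
  v \in subtree pr u -> v \in subtree pr u' -> u = u'.
Proof.
wlog [n [m [le_nm hn hm]]] :
    u u' / exists n m, [/\ (n <= m)%N, iter n pr v = u & iter m pr v = u'].
  move=> hw hu hu' hv hv'; have [n hn] := subtreeP hv; have [m hm] := subtreeP hv'.
  have [le_nm|/ltnW le_mn] := leqP n m; first by apply: hw => //; exists n, m.
  by apply/esym/hw => //; exists m, n.
rewrite !inE => /andP[_ /eqP pr_u] /andP[u'_o /eqP pr_u'] _ _.
move: hm; rewrite -(subnK le_nm) iterD hn; case: (m - n)%N => [//|j].
rewrite iterSr pr_u => hj; apply/esym; move: u'_o; apply: contraNeq => _.
by apply/eqP/(@tree_iter_cycle u' j); rewrite iterSr pr_u'.
Qed.

Lemma cT_desc (R : realType) (a : M -> R) w : w != o ->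
  cT pr a w = a w + \sum_(u in desc o pr w) cT pr a u.
Proof.
move=> w_o; rewrite /cT (bigD1 w) /=; last by apply/subtreeP; exists 0%N.
congr (_ + _); rewrite (exchange_big_dep predT) // big_mkcond /=.
apply: eq_bigr => v _; case: ifP => [/andP[v_w v_ne_w]|v_nw].
  have [u u_w v_u] := subtree_descP w_o v_w v_ne_w.
  rewrite (big_pred1 u) // => u' /=.
  apply/andP/eqP => [[u'_w v_u']|->//]; exact: subtree_desc_uniq u'_w u_w v_u' v_u.
rewrite big_pred0 // => u; apply/negbTE/andP => -[u_w v_u].
by move: (subtree_desc u_w v_u); rewrite v_nw.
Qed.

Lemma sum_scale_cT_edges (R : realType) (V : lmodType R) (a : M -> R) (g : M -> V) :
  g o = 0 ->
  \sum_(x | x != o) a x *: g x = \sum_(x | x != o) cT pr a x *: (g x - g (pr x)).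
Proof.
move=> g_o.
have sum_pred : \sum_(x | x != o) cT pr a x *: g (pr x) =
    \sum_(w | w != o) (cT pr a w - a w) *: g w.
  rewrite (partition_big pr predT) // (bigD1 o) //= big1 ?add0r; last first.
    by move=> x /andP[_ /eqP ->]; rewrite g_o scaler0.
  apply: eq_bigr => w w_o; rewrite cT_desc // (addrC (a w)) addrK scaler_suml.
  by apply: eq_big => [x|x /andP[_ /eqP ->]] //; rewrite inE.
under [RHS]eq_bigr do rewrite scalerBr.
rewrite sumrB sum_pred -sumrB; apply: eq_bigr => x _.
by rewrite scalerBl opprB addrC subrK.
Qed.

End Tree.

Lemma powR_pnorm_sum_le (R : realType) (Y : lmodType R) (p : R) (N : Y -> R)
    (I : finType) (P : pred I) (F : I -> Y) :
  0 < p -> N 0 = 0 -> (forall y1 y2, N (y1 + y2) `^ p <= N y1 `^ p + N y2 `^ p) ->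
  N (\sum_(i | P i) F i) `^ p <= \sum_(i | P i) N (F i) `^ p.
Proof.
move=> p_gt0 N0 N_tri; apply: (big_ind2 (fun y r => N y `^ p <= r)) => //.
- by rewrite N0 powR0 ?lt0r_neq0.
- by move=> y1 r1 y2 r2 h1 h2; apply: le_trans (N_tri y1 y2) (lerD h1 h2).
Qed.

Lemma powR_le_root (R : realType) (p x s : R) :
  0 < p -> 0 <= x -> x `^ p <= s -> x <= s `^ p^-1.
Proof.
move=> p_gt0 x_ge0 le_xs.
rewrite -[x in x <= _](powRr1 x_ge0) -(mulfV (lt0r_neq0 p_gt0)) powRrM.
apply: ge0_ler_powR; rewrite ?nnegrE ?invr_ge0 ?(ltW p_gt0) ?powR_ge0 //.
exact: le_trans (powR_ge0 x p) le_xs.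
Qed.

Section ContractEdge.
Variables (R : realType) (M : finType) (o z : M) (pr : M -> M).
Hypotheses (tree : is_tree o pr) (z_o : z != o).

Definition contract x := if x == z then pr z else x.

Lemma contract_neq x : contract x != z.
Proof. by rewrite /contract; case: (eqVneq x z) => // _; exact: (pred_neq tree z_o). Qed.

Lemma contract_z : contract z = pr z.
Proof. by rewrite /contract eqxx. Qed.

Lemma contract_id x : x != z -> contract x = x.
Proof. by rewrite /contract => /negbTE ->. Qed.

Variables (d : M -> M -> R) (p : R) (a : M -> R).
Hypothesis d_ge0 : forall x y, 0 <= d x y.

Lemma powR_norm_mul_dist c x y : `|c * d x y| `^ p = `|c| `^ p * d x y `^ p.
Proof. by rewrite normrM (ger0_norm (d_ge0 x y)) powRM ?normr_ge0. Qed.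

Hypothesis a_z : a z = 0.

Lemma sum_powR_edges_split :
  \sum_(x | x != o) `|cT pr a x * d (pr x) x| `^ p =
  Tza o d p pr a z +
    \sum_(x | (x != o) && (pr x != z) && (x != z)) `|cT pr a x * d (pr x) x| `^ p.
Proof.
have pr_z : pr z != z := pred_neq tree z_o.
rewrite (bigID (fun x => pr x == z)) [X in _ + X = _](bigD1 z) /=; last by rewrite z_o pr_z.
have children : \sum_(x | (x != o) && (pr x == z)) `|cT pr a x * d (pr x) x| `^ p =
    \sum_(y in desc o pr z) `|cT pr a y| `^ p * d z y `^ p.
  by apply: eq_big => [x|x /andP[_ /eqP ->]]; rewrite ?inE ?powR_norm_mul_dist.
have at_z : `|cT pr a z * d (pr z) z| `^ p =
    `|\sum_(y in desc o pr z) cT pr a y| `^ p * d (pr z) z `^ p.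
  by rewrite (cT_desc tree) // a_z add0r powR_norm_mul_dist.
by rewrite /Tza children at_z addrA.
Qed.

Lemma sum_powR_contracted_split :
  \sum_(x | (x != o) && (x != z)) `|cT pr a x| `^ p * d (contract (pr x)) x `^ p =
  \sum_(y in desc o pr z) `|cT pr a y| `^ p * d (pr z) y `^ p +
    \sum_(x | (x != o) && (pr x != z) && (x != z)) `|cT pr a x * d (pr x) x| `^ p.
Proof.
have pr_z : pr z != z := pred_neq tree z_o.
rewrite (bigID (fun x => pr x == z)) /=; congr (_ + _); apply: eq_big.
- move=> x; rewrite inE -andbA; case: (eqVneq x z) => [->|_] //.
  by rewrite (negbTE pr_z) !andbF.
- by move=> x /andP[_ /eqP ->]; rewrite contract_z.
- by move=> x; rewrite andbAC.
- by move=> x /andP[_ pr_x]; rewrite contract_id // powR_norm_mul_dist.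
Qed.

Lemma sum_powR_contracted_le :
  \sum_(y in desc o pr z) `|cT pr a y| `^ p * d (pr z) y `^ p <= Tza o d p pr a z ->
  \sum_(x | (x != o) && (x != z)) `|cT pr a x| `^ p * d (contract (pr x)) x `^ p <=
  \sum_(x | x != o) `|cT pr a x * d (pr x) x| `^ p.
Proof. by rewrite sum_powR_contracted_split sum_powR_edges_split lerD2r. Qed.

Variables (Y : lmodType R) (N : Y -> R) (f : M -> Y).
Hypotheses (p_gt0 : 0 < p) (d_sym : forall x y, d x y = d y x).
Hypotheses (N_ge0 : forall y, 0 <= N y) (N0 : N 0 = 0).
Hypothesis NZ : forall (k : R) y, N (k *: y) = `|k| * N y.
Hypothesis f_lip : forall x y, x != z -> y != z -> N (f x - f y) <= d x y.

Lemma sum_powR_edges_contract_le :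
  \sum_(x | x != o) N (cT pr a x *: (f (contract x) - f (contract (pr x)))) `^ p <=
  \sum_(x | (x != o) && (x != z)) `|cT pr a x| `^ p * d (contract (pr x)) x `^ p.
Proof.
rewrite (bigD1 z) //= contract_z (contract_id (pred_neq tree z_o)) subrr scaler0.
rewrite N0 powR0 ?lt0r_neq0 // add0r; apply: ler_sum => x /andP[_ x_z].
rewrite (contract_id x_z) NZ powRM ?normr_ge0 //.
apply: ler_wpM2l; first exact: powR_ge0.
rewrite d_sym; apply: ge0_ler_powR; rewrite ?nnegrE ?(ltW p_gt0) //.
exact: f_lip x_z (contract_neq _).
Qed.

End ContractEdge.

Theorem lemma3p4 (R : realType) (p : R) (M : finType) (o : M) (d : M -> M -> R)
  (a : M -> R) (z : M) (pr : M -> M) :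
  0 < p < 1 -> pmetric p d ->
  z != o -> a z = 0 ->
  is_tree o pr -> (1 <= #|desc o pr z|)%N ->
  \sum_(y in desc o pr z) `| cT pr a y | `^ p * d (pr z) y `^ p <= Tza o d p pr a z ->
  (* ||sum_{x in M\{0,z}} a_x delta(x)||_{F_p(M\{z})} <= T(a), unfolded:
     for every p-Banach Y and 1-Lipschitz f : M\{z} -> Y with f(0)=0 *)
  forall (Y : lmodType R) (N : Y -> R), pBanach p N ->
  forall f : M -> Y, f o = 0 ->
  (forall x y, x != z -> y != z -> N (f x - f y) <= d x y) ->
  N (\sum_(x | (x != o) && (x != z)) a x *: f x) <= Tnorm o d p pr a.
Proof.
move=> /andP[p_gt0 _] [d_ge0 _ d_sym _] z_o a_z tree _ hyp Y N [N_ge0 N_eq0 NZ N_tri _].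
move=> f f_o f_lip; have N0 : N 0 = 0 by apply/N_eq0.
have -> : \sum_(x | (x != o) && (x != z)) a x *: f x =
    \sum_(x | x != o) a x *: f (contract z pr x).
  rewrite [RHS](bigD1 z) //= a_z scale0r add0r.
  by apply: eq_bigr => x /andP[_ x_z]; rewrite contract_id.
rewrite (sum_scale_cT_edges tree); last by rewrite contract_id 1?eq_sym.
apply: powR_le_root => //; apply: le_trans (powR_pnorm_sum_le _ _ p_gt0 N0 N_tri) _.
apply: le_trans (sum_powR_edges_contract_le tree z_o a d_ge0 p_gt0 d_sym N_ge0 N0 NZ f_lip) _.
exact: sum_powR_contracted_le.
Qed.
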